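(* Let $r,m\in\mathbb{N}$ and let $G$ be a graph with $\mathrm{scol}_r(G)=m$. Then every vertex of $G$ has finite $(r,m-1)$-rank.
   Context: Strong coloring numbers (with the following orientation convention): for a linear order $\le$ on $V(G)$, a vertex $w$ is strongly $r$-reachable from $v$ if $w\ge v$ and there is a path from $v$ to $w$ of length at most $r$ all of whose vertices other than $v$ and $w$ are smaller than $v$. $\mathrm{scol}_r(G)$ is the minimum over all linear orders of $V(G)$ of the maximum, over vertices $v$, of the number of vertices strongly $r$-reachable from $v$. $N_r^G(v)$ is the closed $r$-neighborhood of $v$; $G-S$ is the subgraph induced on $V(G)\setminus S$. The $(r,m)$-rank of vertices of $G$ (values in $\mathbb{N}\cup\{\infty\}$) is defined by: initially every vertex has rank $\infty$; in rounds $i=1,2,\dots$, every vertex $v$ currently of rank $\infty$ receives rank $i$ if there exists $S\subseteq V(G)\setminus\{v\}$ with $|S|\le m$ such that every vertex of $N_r^{G-S}(v)\setminus\{v\}$ received a finite rank in rounds $1,\dots,i-1$; the procedure stops when all ranks are finite or a round assigns no new rank. *)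

(* Finite simple graphs on a finType T, given by an
   adjacency relation e : rel T (assumed symmetric and irreflexive in the
   theorem). *)
From mathcomp Require Import all_boot fingroup perm.
From mathcomp Require Import boolp.
Set Implicit Arguments. Unset Strict Implicit. Unset Printing Implicit Defensive.

Section Defs.
Variable T : finType.

(* A linear order on T is encoded by a permutation p : {perm T};
   x <=_p y iff the position of p x in enum T is at most that of p y.
   Every linear order on the finite set T arises this way. *)
Definition ord_le (p : {perm T}) (x y : T) : bool :=
  (enum_rank (p x) <= enum_rank (p y))%N.
Definition ord_lt (p : {perm T}) (x y : T) : bool :=
  (enum_rank (p x) < enum_rank (p y))%N.

Definition sreach (e : rel T) (r : nat) (p : {perm T}) (v w : T) : Prop :=
  ord_le p v w /\
  exists s : seq T, [/\ path e v s, last v s = w, (size s <= r)%N &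
                        all (fun x => ord_lt p x v) (take (size s).-1 s)].

Definition sreach_set (e : rel T) (r : nat) (p : {perm T}) (v : T) : {set T} :=
  [set w | `[< sreach e r p v w >]].

Definition scol_of (e : rel T) (r : nat) (p : {perm T}) : nat :=
  \max_(v : T) #|sreach_set e r p v|.

Definition scol (e : rel T) (r : nat) : nat :=
  \big[minn/scol_of e r 1%g]_(p : {perm T}) scol_of e r p.

(* closed r-neighbourhood of v in G - S (meaningful when v \notin S):
   vertices u reachable from v by a walk of length <= r avoiding S *)
Definition nbhd_minus (e : rel T) (r : nat) (S : {set T}) (v : T) : {set T} :=
  [set u | `[< exists s : seq T, [/\ path e v s, last v s = u,
                 (size s <= r)%N & all (fun x => x \notin S) s] >]].

(* ranked r m e i = set of vertices having received a finite (r,m)-rank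
   in rounds 1..i. *)
Fixpoint ranked (e : rel T) (r m : nat) (i : nat) : {set T} :=
  match i with
  | 0 => set0
  | i'.+1 =>
      let R := ranked e r m i' in
      R :|: [set v | `[< exists S : {set T},
                [/\ v \notin S, (#|S| <= m)%N &
                    nbhd_minus e r S v :\ v \subset R] >]]
  end.

Definition finite_rank (e : rel T) (r m : nat) (v : T) : Prop :=
  exists i, v \in ranked e r m i.

End Defs.

(** Take an order p attaining scol_r(G) = m and let S_v be the set of
   vertices strongly r-reachable from v, minus v itself, so |S_v| <= m - 1.
   Every walk of length at most r from v avoiding S_v stays among v and
   vertices smaller than v: at the first vertex w >= v, w <> v, cut the walk
   at its last visit to v; the remaining segment witnesses that w is strongly
   r-reachable, i.e. w lies in S_v.  Hence the r-neighbourhood of v in G - S_v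
   consists of smaller vertices, and induction along p shows that the k-th
   smallest vertex gets rank at most k. *)
From mathcomp Require Import all_boot fingroup perm.
From mathcomp Require Import boolp.

Set Implicit Arguments. Unset Strict Implicit. Unset Printing Implicit Defensive.

Lemma split_at_last_occurrence (T : eqType) (v : T) (t : seq T) :
  exists t1 t2, [/\ t = t1 ++ t2, last v t1 = v & v \notin t2].
Proof.
elim/last_ind: t => [|t y [t1 [t2 [-> last_t1 v_t2]]]]; first by exists [::], [::].
have [->|yv] := eqVneq y v.
  exists (rcons (t1 ++ t2) v), [::].
  by rewrite cats0 last_rcons.
exists t1, (rcons t2 y); rewrite rcons_cat; split=> //.
by rewrite mem_rcons in_cons eq_sym (negPf yv).
Qed.

Section StrongReachability.
Variables (T : finType) (e : rel T) (r : nat) (p : {perm T}).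

Lemma sreach_set_refl (v : T) : v \in sreach_set e r p v.
Proof. by rewrite inE; apply/asboolP; split; [rewrite /ord_le | exists [::]]. Qed.

Lemma card_sreach_set_le (v : T) : #|sreach_set e r p v| <= scol_of e r p.
Proof. exact: (leq_bigmax_cond (F := fun v => #|sreach_set e r p v|)). Qed.

Lemma walk_avoiding_sreach_set_lt (v : T) (s : seq T) :
  path e v s -> size s <= r -> all [predC sreach_set e r p v :\ v] s ->
  all (fun x => (x == v) || ord_lt p x v) s.
Proof.
elim/last_ind: s => [|t x IH] //.
rewrite rcons_path size_rcons !all_rcons => /andP[e_t e_x] sz /andP[x_out t_out].
have t_small := IH e_t (ltnW sz) t_out.
rewrite t_small andbT; have [//|xv] := eqVneq x v.
apply: contraT => x_not_lt; move: x_out; rewrite /= in_setD1 xv inE.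
case/negP; apply/asboolP; split; first by rewrite /ord_le leqNgt.
have [t1 [t2 [def_t last_t1 v_t2]]] := split_at_last_occurrence v t.
exists (rcons t2 x); split.
- by move: e_t e_x; rewrite def_t cat_path last_cat last_t1 rcons_path => /andP[_ ->].
- by rewrite last_rcons.
- by rewrite size_rcons (leq_trans _ sz) // ltnS def_t size_cat leq_addl.
- rewrite size_rcons -cats1 take_size_cat //; apply/allP=> y y_t2.
  have y_t : y \in t by rewrite def_t mem_cat y_t2 orbT.
  have /orP[/eqP yv|//] := allP t_small y y_t.
  by rewrite -yv y_t2 in v_t2.
Qed.

Lemma nbhd_minus_sreach_set_lt (v u : T) :
  u \in nbhd_minus e r (sreach_set e r p v :\ v) v :\ v -> ord_lt p u v.
Proof.
rewrite in_setD1 inE => /andP[uv /asboolP[s [e_s last_s sz out_s]]].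
have /allP small := walk_avoiding_sreach_set_lt e_s sz out_s.
have u_s : u \in s.
  case: s last_s {e_s sz out_s small} => [/= vu | y s <- /=]; last exact: mem_last.
  by rewrite vu eqxx in uv.
by have /orP[/eqP uv'|//] := small u u_s; rewrite uv' eqxx in uv.
Qed.

End StrongReachability.

Section Ranks.
Variables (T : finType) (e : rel T) (r m : nat).

Lemma ranked_subset (i j : nat) : i <= j -> ranked e r m i \subset ranked e r m j.
Proof.
move=> /subnK <-; elim: (j - i) => [|k IH] //=.
exact: subset_trans IH (subsetUl _ _).
Qed.

Lemma ranked_by_order (p : {perm T}) :
  (forall v, exists S : {set T},
     [/\ v \notin S, #|S| <= m & nbhd_minus e r S v :\ v \subset [set u | ord_lt p u v]]) ->
  forall v, v \in ranked e r m (enum_rank (p v)).+1.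
Proof.
move=> hS v; have [n def_n] : {n : nat | n = enum_rank (p v)} by exists (enum_rank (p v)).
rewrite -def_n; move: n v def_n; elim/ltn_ind => n IH v def_n.
have [S [vS cardS nbhd_lt]] := hS v.
apply/setUP; right; rewrite inE; apply/asboolP.
exists S; split=> //; apply/subsetP=> u /(subsetP nbhd_lt); rewrite inE /ord_lt -def_n => un.
exact: subsetP (ranked_subset un) u (IH _ un u erefl).
Qed.

End Ranks.

Lemma scol_attained (T : finType) (e : rel T) (r : nat) :
  exists p, scol_of e r p = scol e r.
Proof.
apply: (big_ind (fun k => exists p, scol_of e r p = k)) => [|k l [p <-] [q <-]|q _].
- by exists 1%g.
- by rewrite /minn; case: ifP; [exists p | exists q].
- by exists q.
Qed.

Theorem lemma3p6 (T : finType) (e : rel T) (r m : nat)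
  (e_sym : symmetric e) (e_irr : irreflexive e) :
  scol e r = m -> forall v : T, finite_rank e r (m - 1) v.
Proof.
move=> scol_m; have [p scol_p] := scol_attained e r.
suff: forall v, v \in ranked e r (m - 1) (enum_rank (p v)).+1 by move=> H v; exists (enum_rank (p v)).+1.
apply: ranked_by_order => v; exists (sreach_set e r p v :\ v); split.
- by rewrite in_setD1 eqxx.
- have := card_sreach_set_le e r p v.
  rewrite -scol_m -scol_p (cardsD1 v (sreach_set e r p v)) sreach_set_refl add1n => le_card.
  by rewrite subn1 -ltnS (ltn_predK le_card).
- by apply/subsetP=> u /nbhd_minus_sreach_set_lt; rewrite inE.
Qed.
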